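(* Let $X$ be a scalable monoid over $R$. If $\mathsf{C}$ is a non-trivial orbitoid of $X$ (i.e. $\mathsf{C}\neq\{0_{\mathsf{C}}\}$) that contains a unit element, then $R$ is a non-trivial commutative ring, and $\mathsf{C}$, equipped with the addition $x+y=(\rho+\sigma)\cdot u$ (for $x=\rho\cdot u$, $y=\sigma\cdot u$, $u$ a unit element for $\mathsf{C}$) and with the scalar multiplication $(\lambda,x)\mapsto\lambda\cdot x$ inherited from $X$, is a free module of rank 1 over $R$.
   Context: $R$ is a unital associative (not necessarily commutative) ring. A scalable monoid over $R$ is a monoid $X$ (identity $1_X$) with a map $R\times X\to X$, $(\alpha,x)\mapsto\alpha\cdot x$, such that $1\cdot x=x$, $\alpha\cdot(\beta\cdot x)=\alpha\beta\cdot x$ and $\alpha\cdot xy=(\alpha\cdot x)y=x(\alpha\cdot y)$ for all $\alpha,\beta\in R$, $x,y\in X$. Two elements $x,y\in X$ are commensurable, $x\sim y$, if $\alpha\cdot x=\beta\cdot y$ for some $\alpha,\beta\in R$; this is an equivalence relation, and its equivalence classes are called orbitoids (commensurability classes). Every orbitoid $\mathsf{C}$ has a unique zero element $0_{\mathsf{C}}$ with $0_{\mathsf{C}}=0\cdot x$ for all $x\in\mathsf{C}$; $\mathsf{C}$ is trivial if $\mathsf{C}=\{0_{\mathsf{C}}\}$. A unit element for an orbitoid $\mathsf{C}$ is some $u\in\mathsf{C}$ such that every $x\in\mathsf{C}$ equals $\lambda\cdot u$ for some $\lambda\in R$, and such that $\lambda\cdot u=\lambda'\cdot u$ implies $\lambda=\lambda'$.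 For $x=\rho\cdot u$ and $y=\sigma\cdot u$ in $\mathsf{C}$ ($u$ a unit element for $\mathsf{C}$), the sum is defined as $x+y=(\rho+\sigma)\cdot u$; this does not depend on the choice of unit element $u$. *)

From HB Require Import structures.
From mathcomp Require Import all_boot all_algebra.
Set Implicit Arguments. Unset Strict Implicit. Unset Printing Implicit Defensive.
Import GRing.Theory.
Local Open Scope ring_scope.

(* A unital associative (possibly non-commutative, possibly trivial) ring is a
   mathcomp [pzRingType]. *)
Definition is_scalable_monoid (R : pzRingType) (X : Type)
    (mul : X -> X -> X) (one : X) (sc : R -> X -> X) : Prop :=
  (forall x y z, mul x (mul y z) = mul (mul x y) z) /\
  (forall x, mul one x = x) /\
  (forall x, mul x one = x) /\
  (forall x, sc 1 x = x) /\
  (forall a b x, sc a (sc b x) = sc (a * b) x) /\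
  (forall a x y, sc a (mul x y) = mul (sc a x) y /\
                     sc a (mul x y) = mul x (sc a y)).

Definition commensurable (R : pzRingType) (X : Type) (sc : R -> X -> X)
    (x y : X) : Prop :=
  exists a b : R, sc a x = sc b y.

Definition is_orbitoid (R : pzRingType) (X : Type) (sc : R -> X -> X)
    (C : X -> Prop) : Prop :=
  exists c : X, forall x, C x <-> commensurable sc x c.

(* the orbitoid C is non-trivial: C <> {0_C}, where 0_C = 0 . x for x in C *)
Definition nontrivial_orbitoid (R : pzRingType) (X : Type) (sc : R -> X -> X)
    (C : X -> Prop) : Prop :=
  exists x, C x /\ x <> sc 0 x.

Definition unit_element (R : pzRingType) (X : Type) (sc : R -> X -> X)
    (C : X -> Prop) (u : X) : Prop :=
  [/\ C u,
      (forall x, C x -> exists l : R, x = sc l u)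
    & (forall l l' : R, sc l u = sc l' u -> l = l')].

Definition is_module_on (R : pzRingType) (X : Type) (C : X -> Prop)
    (add : X -> X -> X) (sc : R -> X -> X) (z : X) : Prop :=
  (forall x y, C x -> C y -> C (add x y)) /\
  (forall a x, C x -> C (sc a x)) /\
  C z /\
  (forall x y w, C x -> C y -> C w -> add x (add y w) = add (add x y) w) /\
  (forall x y, C x -> C y -> add x y = add y x) /\
  (forall x, C x -> add z x = x) /\
  (forall x, C x -> exists y, C y /\ add x y = z) /\
  (forall a x y, C x -> C y -> sc a (add x y) = add (sc a x) (sc a y)) /\
  (forall a b x, C x -> sc (a + b) x = add (sc a x) (sc b x)) /\
  (forall a b x, C x -> sc (a * b) x = sc a (sc b x)) /\
  (forall x, C x -> sc 1 x = x).

Definition free_rank1_module_on (R : pzRingType) (X : Type) (C : X -> Prop)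
    (add : X -> X -> X) (sc : R -> X -> X) : Prop :=
  exists z : X, is_module_on C add sc z /\
    exists b : X, [/\ C b,
                      (forall x, C x -> exists a : R, x = sc a b)
                    & (forall a : R, sc a b = z -> a = 0)].

(** Commensurability is governed by the zero multiples: [x ~ y] iff [0.x = 0.y],
    so an orbitoid is closed under scaling.  A unit element [u] makes
    [l |-> l.u] a bijection from [R] onto the orbitoid [C]; transporting the
    left regular module structure of [R] along it makes [C] free of rank 1.
    In a scalable monoid scalars commute past each other through the monoid
    product, [a.(b.u) = (a.1)(b.u) = b.((a.1)u) = b.(a.u)], and injectivity of
    [l |-> l.u] turns this into [ab = ba].  Finally [1 = 0] would force
    [x = 1.x = 0.x] for every [x]. *)
From mathcomp Require Import all_boot all_algebra.
From Stdlib Require Import ClassicalEpsilon.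
Set Implicit Arguments. Unset Strict Implicit.
Local Open Scope ring_scope.
Import GRing.Theory.

Section Action.

Variables (R : pzRingType) (X : Type) (sc : R -> X -> X).
Hypothesis scA : forall a b x, sc a (sc b x) = sc (a * b) x.

Lemma commensurableE x y : commensurable sc x y <-> sc 0 x = sc 0 y.
Proof.
rewrite /commensurable; split=> [[a [b eab]] | e0]; last by exists 0, 0.
by rewrite -[in LHS](mul0r a) -scA eab scA mul0r.
Qed.

Lemma orbitoid_scale C : is_orbitoid sc C -> forall l x, C x -> C (sc l x).
Proof.
case=> c HC l x /HC /commensurableE e0; apply/HC/commensurableE.
by rewrite scA mul0r.
Qed.

Hypothesis sc1 : forall x, sc 1 x = x.

Lemma nontrivial_orbitoid_oner_neq0 C : nontrivial_orbitoid sc C -> (1 : R) <> 0.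
Proof. by case=> x [_ nx0] e10; apply: nx0; rewrite -e10 sc1. Qed.

Section UnitCoordinates.

Variables (C : X -> Prop) (u : X).
Hypothesis C_scale : forall l x, C x -> C (sc l x).
Hypothesis unit_u : unit_element sc C u.

Definition unit_coord (x : X) : R := epsilon (inhabits 0) (fun l => x = sc l u).

Lemma unit_coordE x : C x -> x = sc (unit_coord x) u.
Proof. by case: unit_u => _ span_u _ /span_u; apply: epsilon_spec. Qed.

Lemma unit_coordK l : unit_coord (sc l u) = l.
Proof.
case: unit_u => Cu _ inj_u; apply: inj_u.
by rewrite -unit_coordE; last exact: C_scale.
Qed.

Definition unit_add (x y : X) : X := sc (unit_coord x + unit_coord y) u.

Lemma unit_addE v : C v ->
  forall rho sigma, unit_add (sc rho v) (sc sigma v) = sc (rho + sigma) v.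
Proof. by move=> /unit_coordE -> rho sigma; rewrite /unit_add !scA !unit_coordK mulrDl. Qed.

Lemma unit_add_module : is_module_on C unit_add sc (sc 0 u).
Proof.
have Cu : C u by case: unit_u.
do 10?split.
- by move=> x y _ _; apply: C_scale.
- by move=> a x; apply: C_scale.
- exact: C_scale.
- by move=> x y w _ _ _; rewrite /unit_add !unit_coordK addrA.
- by move=> x y _ _; rewrite /unit_add addrC.
- by move=> x /unit_coordE {2}->; rewrite /unit_add unit_coordK add0r.
- move=> x _; exists (sc (- unit_coord x) u); split; first exact: C_scale.
  by rewrite /unit_add unit_coordK subrr.
- move=> a x y /unit_coordE ex /unit_coordE ey.
  by rewrite /unit_add {2}ex {2}ey !scA !unit_coordK mulrDr.
- by move=> a b x /unit_coordE {1 2 3}->; rewrite /unit_add !scA !unit_coordK mulrDl.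
- by move=> a b x _; rewrite scA.
- by move=> x _; rewrite sc1.
Qed.

Lemma unit_add_free_rank1 : free_rank1_module_on C unit_add sc.
Proof.
exists (sc 0 u); split; first exact: unit_add_module.
case: unit_u => Cu span_u inj_u.
by exists u; split=> // a /inj_u.
Qed.

End UnitCoordinates.

End Action.

Section ScalableMonoid.

Variables (R : pzRingType) (X : Type) (mul : X -> X -> X) (one : X).
Variable sc : R -> X -> X.
Hypothesis HX : is_scalable_monoid mul one sc.

Lemma mul_scale_onel a x : mul (sc a one) x = sc a x.
Proof. by case: HX => _ [mul1x [_ [_ [_ scM]]]]; rewrite -(scM a one x).1 mul1x. Qed.

Lemma scale_injective_comm u :
  (forall l l', sc l u = sc l' u -> l = l') -> forall a b : R, a * b = b * a.
Proof.
case: HX => _ [_ [_ [_ [scA scM]]]] inj_u a b; apply: inj_u.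
by rewrite -!scA -mul_scale_onel -(scM b _ u).2 mul_scale_onel.
Qed.

End ScalableMonoid.

Theorem proposition2p36 (R : pzRingType) (X : Type)
    (mul : X -> X -> X) (one : X) (sc : R -> X -> X)
    (HX : is_scalable_monoid mul one sc)
    (C : X -> Prop) (HC : is_orbitoid sc C)
    (Hnt : nontrivial_orbitoid sc C)
    (Hu : exists u, unit_element sc C u) :
  [/\ (1 : R) <> 0,
      (forall a b : R, a * b = b * a)
    & exists add : X -> X -> X,
        (forall u, unit_element sc C u ->
           forall rho sigma : R, add (sc rho u) (sc sigma u) = sc (rho + sigma) u)
        /\ free_rank1_module_on C add sc].
Proof.
have [_ [_ [_ [sc1 [scA _]]]]] := HX.
have C_scale := orbitoid_scale scA HC.
case: Hu => u unit_u.
split.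
- exact: (nontrivial_orbitoid_oner_neq0 sc1 Hnt).
- by case: unit_u => _ _ /(scale_injective_comm HX).
- exists (unit_add sc u); split; last exact: unit_add_free_rank1.
  by move=> v [Cv _ _]; apply: (unit_addE scA C_scale unit_u Cv).
Qed.
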